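(* Let $p\ge1$, let $\phi_1,\dots,\phi_p:\mathbb Z\to\mathbb C$, let $s\in\mathbb Z$ and $1\le m\le p$. Then the function $t\mapsto \xi^{(m)}_{t,s}$, $t\in\{s-p+1,s-p+2,\dots\}$, satisfies $$\xi^{(m)}_{t,s}=\sum_{l=1}^{p}\phi_l(t)\,\xi^{(m)}_{t-l,s}\quad\text{for all } t\ge s+1,$$ with initial values $\xi^{(m)}_{s-m+1,s}=1$ and $\xi^{(m)}_{s-i,s}=0$ for $0\le i\le p-1$, $i\ne m-1$.
   Context: Convention: $\phi_l(t)=0$ for $l>p$. For integers $t>s$ and $1\le m\le p$, $\Phi^{(m)}_{t,s}$ is the $(t-s)\times(t-s)$ lower Hessenberg matrix whose $(i,j)$ entry ($1\le i,j\le t-s$) is: $\phi_{m+i-1}(s+i)$ if $j=1$; $-1$ if $j=i+1$; $\phi_{i-j+1}(s+i)$ if $2\le j\le i$; $0$ if $j>i+1$. Define, for $t\ge s-p+1$: $\xi^{(m)}_{t,s}=\det\Phi^{(m)}_{t,s}$ if $t>s$; $\xi^{(m)}_{t,s}=1$ if $t=s-m+1$; $\xi^{(m)}_{t,s}=0$ if $s-p+1\le t\le s$ and $t\ne s-m+1$. *)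

From HB Require Import structures.
From mathcomp Require Import all_boot all_order all_algebra.
From mathcomp Require Import complex.
From mathcomp Require Import Rstruct.
Import ComplexField.
Set Implicit Arguments. Unset Strict Implicit. Unset Printing Implicit Defensive.
Import Order.TTheory GRing.Theory Num.Theory.
Local Open Scope ring_scope.

Notation C := (complex Rdefinitions.R).

Definition phiext (p : nat) (phi : nat -> int -> C) (l : nat) (t : int) : C :=
  if (l <= p)%N then phi l t else 0.

(* Phi^{(m)}_{t,s} of size n = t - s, indices shifted to 0-based:
   row i (paper i+1), column j (paper j+1). *)
Definition PhiMat (p : nat) (phi : nat -> int -> C) (m : nat) (s : int) (n : nat)
  : 'M[C]_n :=
  \matrix_(i < n, j < n)
    if j == 0%N :> nat then phiext p phi (m + i) (s + (i.+1)%:Z)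
    else if j == i.+1 :> nat then -1
    else if (j <= i)%N then phiext p phi (i - j).+1 (s + (i.+1)%:Z)
    else 0.

(* xi^{(m)}_{t,s}; the value for t < s-p+1 (outside the domain) is set to 0
   and is never used. *)
Definition xi (p : nat) (phi : nat -> int -> C) (m : nat) (t s : int) : C :=
  if s < t then \det (PhiMat p phi m s `|t - s|%N)
  else if t == s - m%:Z + 1 then 1 else 0.

(* Φ^{(m)}_{t,s} is a lower Hessenberg matrix H_n with -1 on the superdiagonal.
   For such matrices the column of leading principal minors v = (det H_k)_k is
   mapped by H_{n+1} to a multiple of the last unit vector, the multiple being
   Σ_k h(n,k) det H_k; Cramer's rule, with the cofactor at (n,0) equal to 1,
   turns this into det H_{n+1} = Σ_k h(n,k) det H_k.  Reindexing l = n+1-k gives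
   the recursion for lags l ≤ n; the lags l > n only see the initial values,
   of which just l = n+m survives, and it reproduces the first column
   φ_{m+n}(t) of Φ^{(m)}. *)

From HB Require Import structures.
From mathcomp Require Import all_boot all_order all_algebra.
From mathcomp Require Import complex Rstruct.
From mathcomp Require Import zify.
Import ComplexField.
Import Order.TTheory GRing.Theory Num.Theory.
Local Open Scope ring_scope.

Lemma det_eq_cofactor_mul (R : comNzRingType) n (A : 'M[R]_n) (v : 'cV_n) x i j :
  v j 0 = 1 -> A *m v = x *: delta_mx i 0 -> \det A = cofactor A i j * x.
Proof.
move=> vj1 Av.
have := congr1 (fun M => (\adj A *m M) j 0) Av.
rewrite mulmxA mul_adj_mx mul_scalar_mx -scalemxAr !mxE vj1 mulr1 => ->.
rewrite (bigD1 i) //= big1 ?addr0 => [|k /negPf ki]; last by rewrite !mxE ki mulr0.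
by rewrite !mxE !eqxx mulr1 mulrC.
Qed.

Section Hessenberg.
Variables (R : comNzRingType) (h : nat -> nat -> R).

Definition hessenberg n : 'M[R]_n := \matrix_(i < n, j < n)
  if (j <= i)%N then h i j else if j == i.+1 :> nat then -1 else 0.

Lemma hessenbergE n (i k : 'I_n) :
  hessenberg n i k =
    (if (k <= i)%N then h i k else 0) - (if k == i.+1 :> nat then 1 else 0).
Proof.
rewrite mxE; case: leqP => [ki|]; last by case: eqP; rewrite ?subrr ?sub0r.
by rewrite ifF ?subr0 //; apply/eqP; lia.
Qed.

Lemma cofactor_hessenberg n : cofactor (hessenberg n.+1) ord_max 0 = 1.
Proof.
set B := row' ord_max (col' 0 (hessenberg n.+1)).
have low_row (i : 'I_n) : (n <= i)%N = false by rewrite leqNgt ltn_ord.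
have B_diag i : B i i = -1 by rewrite !mxE /= /bump /= low_row /= ifF ?eqxx //; lia.
have B_trig : is_trig_mx B.
  apply/forallP => i; apply/forallP => j; apply/implyP => ij.
  by rewrite !mxE /= /bump /= low_row /= !ifF //; move: ij => /=; lia.
rewrite /cofactor det_trig // (eq_bigr (fun _ => -1)) // prodr_const card_ord.
by rewrite /= addn0 -exprMn mulrNN mulr1 expr1n.
Qed.

Lemma hessenberg_mul_minors n (i : 'I_n.+1) :
  (hessenberg n.+1 *m \col_(k < n.+1) \det (hessenberg k)) i 0 =
    \sum_(k < i.+1) h i k * \det (hessenberg k)
    - (if (i < n)%N then \det (hessenberg i.+1) else 0).
Proof.
rewrite mxE; under eq_bigr do rewrite hessenbergE mxE mulrBl.
rewrite sumrB; congr (_ - _).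
  rewrite (big_ord_widen _ (fun k => h i k * \det (hessenberg k)) (ltn_ord i)).
  by rewrite [RHS]big_mkcond; apply: eq_bigr => k _; rewrite ltnS; case: ifP; rewrite ?mul0r.
rewrite (eq_bigr (fun k : 'I_n.+1 => if k == i.+1 :> nat then \det (hessenberg k) else 0)).
  by rewrite -big_mkcond (big_ord1_eq _ (fun k => \det (hessenberg k))) ltnS.
by move=> k _; case: ifP; rewrite ?mul1r ?mul0r.
Qed.

Lemma det_hessenberg_rec n :
  \det (hessenberg n.+1) = \sum_(k < n.+1) h n k * \det (hessenberg k).
Proof.
elim/ltn_ind: n => n IH; rewrite -[RHS]mul1r -(cofactor_hessenberg n).
apply: (@det_eq_cofactor_mul _ _ _ (\col_(k < n.+1) \det (hessenberg k))).
  by rewrite mxE det_mx00.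
apply/matrixP => i z; rewrite ord1 hessenberg_mul_minors !mxE.
case: (ltnP i n) => [iN|Ni].
  have /negPf -> : i != ord_max by rewrite -val_eqE /= ltn_eqF.
  by rewrite IH // subrr mulr0.
have -> : i = ord_max by apply/val_inj => /=; have := ltn_ord i; lia.
by rewrite eqxx subr0 mulr1.
Qed.

End Hessenberg.
Arguments hessenberg {R} h n.

Section Xi.
Variables (p : nat) (phi : nat -> int -> C) (m : nat) (s : int).

Definition phi_hess (i k : nat) : C :=
  if k == 0%N then phiext p phi (m + i) (s + i.+1%:Z)
  else phiext p phi (i - k).+1 (s + i.+1%:Z).

Lemma PhiMat_hessenberg n : PhiMat p phi m s n = hessenberg phi_hess n.
Proof.
apply/matrixP => i j; rewrite !mxE /phi_hess.
case: eqP => [->|_]; first by rewrite leq0n.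
by case: (leqP j i) => [ji|//]; rewrite ifF //; lia.
Qed.

Lemma xi_det_hessenberg (k : nat) :
  (0 < k)%N -> xi p phi m (s + k%:Z) s = \det (hessenberg phi_hess k).
Proof.
move=> k0; rewrite /xi PhiMat_hessenberg ifT; last by lia.
by have -> : absz (s + k%:Z - s)%R = k by lia.
Qed.

Lemma xi_initial (t : int) :
  t <= s -> xi p phi m t s = (t == s - m%:Z + 1)%:R.
Proof. by move=> ts; rewrite /xi ifF; [case: eqP | lia]. Qed.

Lemma sum_phiext_widen (t : int) (F : nat -> C) N : (p < N)%N ->
  \sum_(1 <= l < p.+1) phi l t * F l = \sum_(1 <= l < N) phiext p phi l t * F l.
Proof.
move=> pN; rewrite [RHS](big_cat_nat _ (n := p.+1)) //= [X in _ + X]big_nat_cond.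
rewrite [X in _ + X]big1 ?addr0 => [|l /andP [/andP [pl _] _]]; last first.
  by rewrite /phiext leqNgt pl mul0r.
by apply: eq_big_nat => l /andP [_ lp]; rewrite /phiext -ltnS lp.
Qed.

Hypothesis m_gt0 : (0 < m)%N.

Lemma xi_rec_phiext n N : (n + m < N)%N ->
  xi p phi m (s + n.+1%:Z) s =
    \sum_(1 <= l < N) phiext p phi l (s + n.+1%:Z) * xi p phi m (s + n.+1%:Z - l%:Z) s.
Proof.
move=> nmN; rewrite xi_det_hessenberg // det_hessenberg_rec.
rewrite -(big_mkord xpredT (fun k => phi_hess n k * \det (hessenberg phi_hess k))).
rewrite big_ltn // det_mx00 mulr1 [RHS](big_cat_nat _ (n := n.+1)) //=; last by lia.
rewrite addrC; congr (_ + _).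
  under eq_big_nat => l /andP [nl _].
    rewrite xi_initial; last by lia.
    have -> : (s + n.+1%:Z - l%:Z == s - m%:Z + 1) = (l == n + m)%N by lia.
    rewrite mulr_natr mulrb.
  over.
  rewrite -big_mkcond big_nat1_eq ifT; last by lia.
  by rewrite /phi_hess eqxx addnC.
rewrite big_nat_rev; apply: eq_big_nat => k /andP [k1 kn].
rewrite /phi_hess ifF; last by lia.
have -> : (n - (1 + n.+1 - k.+1)).+1 = k by lia.
rewrite -xi_det_hessenberg; last by lia.
by have -> : s + (1 + n.+1 - k.+1)%N%:Z = s + n.+1%:Z - k%:Z by lia.
Qed.

End Xi.

Theorem proposition1 (p : nat) (phi : nat -> int -> C) (s : int) (m : nat) :
  (1 <= p)%N -> (1 <= m <= p)%N ->
  [/\ (forall t : int, s + 1 <= t ->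
         xi p phi m t s = \sum_(1 <= l < p.+1) phi l t * xi p phi m (t - l%:Z) s),
      xi p phi m (s - m%:Z + 1) s = 1
    & (forall i : nat, (i <= p - 1)%N -> i != (m - 1)%N ->
         xi p phi m (s - i%:Z) s = 0)].
Proof.
move=> _ /andP [m_gt0 _]; split.
- move=> t st; set n := (`|t - s|%N).-1.
  have -> : t = s + n.+1%:Z by rewrite /n; lia.
  rewrite (sum_phiext_widen _ _ _ _ (p + n + m).+1); last by lia.
  by apply: xi_rec_phiext => //; lia.
- by rewrite xi_initial ?eqxx //; lia.
- move=> i _ im; rewrite xi_initial; last by lia.
  have -> : (s - i%:Z == s - m%:Z + 1) = false by lia.
  exact: mulr0n.
Qed.
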